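(* Let $n\ge 1$, let $a_1,\dots,a_n$ be positive integers, let $b\ge 0$ be an integer, and let $M$ be the least common multiple of $a_1,\dots,a_n$. Put $d_i=M/a_i$ for $i=1,\dots,n$, and $$f(t_1,\dots,t_n,t_{n+1})=\frac{1}{M}\Bigl(b-\sum_{i=1}^n a_it_i-t_{n+1}\Bigr).$$ Let $Q(b)$ be the number of $n$-tuples $(x_1,\dots,x_n)$ of non-negative integers with $\sum_{i=1}^n a_ix_i\le b$. Then $$Q(b)=\sum_{t_1=0}^{d_1-1}\cdots\sum_{t_n=0}^{d_n-1}\sum_{t_{n+1}=0}^{M-1} C\bigl(f(t_1,\dots,t_n,t_{n+1})+1;\,n\bigr).$$
   Context: For a real number $k$ and a non-negative integer $l$, define $C(k;l)=\frac{1}{l!}\,k(k+1)\cdots(k+l-1)$ if $k$ is a positive integer (natural number), and $C(k;l)=0$ otherwise (in particular $C(k;l)=0$ whenever $k$ is not an integer or $k\le 0$). *)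

From mathcomp Require Import all_boot all_order all_algebra.
Set Implicit Arguments. Unset Strict Implicit. Unset Printing Implicit Defensive.
Import Order.TTheory GRing.Theory Num.Theory.
Local Open Scope ring_scope.

(* C(k;l) = (1/l!) k(k+1)...(k+l-1) if k is a positive integer, 0 otherwise.
   The arguments k that occur in the theorem are rational, so k : rat. *)
Definition Cpoch (k : rat) (l : nat) : rat :=
  if (k \is a Num.nat) && (0 < k)
  then (l`!)%:R^-1 * \prod_(j < l) (k + j%:R)
  else 0.

Definition lcm_all (n : nat) (a : 'I_n -> nat) : nat := \big[lcmn/1%N]_(i < n) a i.

(* Q(b) = #{ x in N^n | sum a_i x_i <= b }.  Since every a_i >= 1, any such x
   has x_i <= b, so it suffices to range over coordinates in 'I_b.+1. *)
Definition Qcount (n : nat) (a : 'I_n -> nat) (b : nat) : nat :=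
  #|[set x : {ffun 'I_n -> 'I_b.+1} | (\sum_(i < n) a i * x i <= b)%N]|.

Definition fval (n : nat) (a : 'I_n -> nat) (b : nat) (t : 'I_n -> nat) (s : nat) : rat :=
  (b%:R - (\sum_(i < n) (a i)%:R * (t i)%:R) - s%:R) / (lcm_all a)%:R.

From mathcomp Require Import all_boot all_order all_algebra.
From mathcomp Require Import zify.
Import Order.TTheory GRing.Theory Num.Theory.
Set Implicit Arguments. Unset Strict Implicit. Unset Printing Implicit Defensive.

(* Write each x_i = d_i y_i + t_i with 0 <= t_i < d_i, and the slack
   b - sum a_i x_i = M z + s with 0 <= s < M.  As a_i d_i = M, this gives
   b - sum a_i t_i - s = M (sum y_i + z).  So the points with residues (t, s)
   exist only when k := f(t, s) is a non-negative integer, and then they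
   correspond to the solutions of sum y_i + z = k, of which there are
   C(k + n, n) = C(k + 1; n) by stars and bars. *)

Lemma prod_rising_bin k l : \prod_(j < l) (k.+1 + j) = 'C(k + l, l) * l`!.
Proof.
rewrite bin_ffact; elim: l => [|l IHl]; first by rewrite big_ord0 addn0 ffactn0.
by rewrite big_ord_recr /= IHl addnS ffactSS addSn mulnC.
Qed.

Lemma Cpoch_natS k l : Cpoch k.+1%:R%R l = 'C(k + l, l)%:R%R.
Proof.
rewrite /Cpoch natr_nat ltr0Sn /=.
under eq_bigr => j _ do rewrite -natrD.
by rewrite -natr_prod prod_rising_bin natrM mulrC mulfK // pnatr_eq0 -lt0n fact_gt0.
Qed.

Section Fibres.

Variables (n : nat) (a : 'I_n -> nat) (b : nat).
Hypothesis a_gt0 : forall i, 0 < a i.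

Local Notation M := (lcm_all a).
Local Notation d i := (lcm_all a %/ a i).
Local Notation weight v := (\sum_(i < n) a i * v i).

Lemma lcm_all_gt0 : 0 < M.
Proof.
rewrite /lcm_all; elim/big_ind: _ => // x y.
by rewrite lcmn_gt0 => -> ->.
Qed.

Lemma dvdn_lcm_all i : a i %| M.
Proof. exact: biglcmn_sup. Qed.

Lemma mul_period i : a i * d i = M.
Proof. by rewrite mulnC divnK ?dvdn_lcm_all. Qed.

Lemma period_gt0 i : 0 < d i.
Proof. by rewrite divn_gt0 // dvdn_leq ?lcm_all_gt0 ?dvdn_lcm_all. Qed.

Lemma weight_divmod (v t : 'I_n -> nat) :
  (forall i, v i %% d i = t i) ->
  weight v = M * \sum_(i < n) v i %/ d i + weight t.
Proof.
move=> vt; rewrite big_distrr -big_split; apply: eq_bigr => i _ /=.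
by rewrite {1}(divn_eq (v i) (d i)) vt mulnDr mulnA [a i * _]mulnC -mulnA mul_period mulnC.
Qed.

Definition fibre (t : 'I_n -> nat) (s : nat) : {set {ffun 'I_n -> 'I_b.+1}} :=
  [set x : {ffun 'I_n -> 'I_b.+1} |
    [&& weight x <= b, [forall i, x i %% d i == t i] & (b - weight x) %% M == s]].

Lemma fibre_slack t s x : x \in fibre t s ->
  b = weight t + s + M * (\sum_(i < n) x i %/ d i + (b - weight x) %/ M).
Proof.
rewrite inE => /and3P[le_xb /forallP xt /eqP xs].
have := weight_divmod (v := fun i => x i) (fun i => eqP (xt i)).
have := divn_eq (b - weight x) M; rewrite xs.
move: le_xb; set W := weight x; set S := \sum_(i < n) x i %/ d i; nia.
Qed.

Lemma fibre0 t s :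
  ~~ ((weight t + s <= b) && (M %| b - (weight t + s))) -> fibre t s = set0.
Proof.
apply: contraNeq => /set0Pn[x /fibre_slack b_eq]; rewrite {1}b_eq leq_addr /=.
by rewrite {1}b_eq addKn dvdn_mulr.
Qed.

Section ResidueClass.

Variables (t : 'I_n -> nat) (s k : nat).
Hypotheses (t_lt : forall i, t i < d i) (s_lt : s < M).
Hypothesis b_eq : b = weight t + s + M * k.

Definition spread (y : n.-tuple 'I_k.+1) : {ffun 'I_n -> 'I_b.+1} :=
  [ffun i => inord (d i * tnth y i + t i)].

Local Notation sum_le_k y := (\sum_(j <- y) (j : nat) <= k).

Lemma weight_spread (y : n.-tuple 'I_k.+1) :
  weight (fun i => d i * tnth y i + t i) = M * \sum_(j <- y) (j : nat) + weight t.
Proof.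
rewrite (@weight_divmod _ t) => [|i]; last by rewrite mulnC modnMDl modn_small.
rewrite big_tuple; congr (M * _ + _); apply: eq_bigr => i _.
by rewrite mulnC divnMDl ?period_gt0 // divn_small ?addn0.
Qed.

Lemma spreadE (y : n.-tuple 'I_k.+1) i :
  sum_le_k y -> (spread y i : nat) = d i * tnth y i + t i.
Proof.
move=> le_yk; rewrite ffunE inordK // ltnS.
have le_term : a i * (d i * tnth y i + t i) <= weight (fun j => d j * tnth y j + t j).
  by rewrite (bigD1 i) //= leq_addr.
rewrite weight_spread in le_term; have := leq_mul (leqnn M) le_yk.
have := leq_pmull (d i * tnth y i + t i) (a_gt0 i); lia.
Qed.

Lemma weight_spreadE (y : n.-tuple 'I_k.+1) :
  sum_le_k y -> weight (spread y) = M * \sum_(j <- y) (j : nat) + weight t.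
Proof.
by move=> le_yk; rewrite -weight_spread; apply: eq_bigr => i _; rewrite spreadE.
Qed.

Lemma spread_fibre (y : n.-tuple 'I_k.+1) : sum_le_k y -> spread y \in fibre t s.
Proof.
move=> le_yk; have le_Mk := leq_mul (leqnn M) le_yk.
rewrite inE weight_spreadE //; apply/and3P; split.
- by rewrite b_eq; lia.
- by apply/forallP => i; rewrite spreadE // mulnC modnMDl modn_small.
- have -> : b - (M * \sum_(j <- y) (j : nat) + weight t) =
            (k - \sum_(j <- y) (j : nat)) * M + s by rewrite b_eq mulnBl; lia.
  by rewrite modnMDl modn_small.
Qed.

Lemma fibre_spread x : x \in fibre t s ->
  exists2 y : n.-tuple 'I_k.+1, sum_le_k y & x = spread y.
Proof.
move=> x_fib; have b_eq' := fibre_slack x_fib.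
set S := \sum_(i < n) x i %/ d i in b_eq'.
have k_eq : k = S + (b - weight x) %/ M.
  by apply/eqP; rewrite -(eqn_pmul2l lcm_all_gt0) -(eqn_add2l (weight t + s)) -b_eq -b_eq'.
pose y := [tuple (inord (x i %/ d i) : 'I_k.+1) | i < n].
have yE i : (tnth y i : nat) = x i %/ d i.
  rewrite tnth_mktuple inordK // ltnS k_eq (leq_trans _ (leq_addr _ _)) //.
  by rewrite /S (bigD1 i) //= leq_addr.
have Sy : \sum_(j <- y) (j : nat) = S by rewrite big_tuple; apply: eq_bigr => i _.
exists y; first by rewrite Sy k_eq leq_addr.
move: x_fib; rewrite inE => /and3P[_ /forallP xt _].
apply/ffunP => i; apply: val_inj; rewrite /= spreadE ?Sy ?k_eq ?leq_addr // yE.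
by rewrite -(eqP (xt i)) mulnC -divn_eq.
Qed.

Lemma spread_inj : {in [pred y : n.-tuple 'I_k.+1 | sum_le_k y] &, injective spread}.
Proof.
move=> y1 y2 le1 le2 /ffunP eq12; apply: eq_from_tnth => i; apply: val_inj.
move: (congr1 val (eq12 i)); rewrite /= !spreadE //.
by move/eqP; rewrite eqn_add2r eqn_pmul2l ?period_gt0 // => /eqP.
Qed.

Lemma card_fibre : #|fibre t s| = 'C(k + n, n).
Proof.
have -> : fibre t s = spread @: [set y : n.-tuple 'I_k.+1 | sum_le_k y].
  apply/setP => x; apply/idP/imsetP => [/fibre_spread[y le_yk ->]|[y]].
    by exists y; rewrite ?inE.
  by rewrite inE => le_yk ->; apply: spread_fibre.
rewrite card_in_imset => [|y1 y2]; last by rewrite !inE; apply: spread_inj.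
by rewrite card_partial_ord_partitions addnC.
Qed.

End ResidueClass.

Definition residues (x : {ffun 'I_n -> 'I_b.+1}) : {ffun 'I_n -> 'I_M} :=
  [ffun i => Ordinal (leq_trans (ltn_pmod (x i) (period_gt0 i)) (leq_div M (a i)))].

Definition slack_residue (x : {ffun 'I_n -> 'I_b.+1}) : 'I_M :=
  Ordinal (ltn_pmod (b - weight x) lcm_all_gt0).

Lemma Qcount_fibres : Qcount a b =
  \sum_(t : {ffun 'I_n -> 'I_M} | [forall i, t i < d i])
     \sum_(s < M) #|fibre (fun i => t i) s|.
Proof.
rewrite /Qcount -sum1_card (partition_big (fun x => (residues x, slack_residue x))
  (fun p => [forall i, p.1 i < d i])) => [|x _]; last first.
  by apply/forallP => i; rewrite ffunE ltn_pmod ?period_gt0.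
rewrite pair_big /=; apply: eq_big => [[t s]|[t s] _] /=; first by rewrite andbT.
rewrite -sum1_card; apply: eq_bigl => x; rewrite !inE xpair_eqE.
congr (_ && (_ && _)).
apply/eqP/forallP => [<- i|xt]; first by rewrite ffunE.
by apply/ffunP => i; apply: val_inj; rewrite ffunE; apply/eqP/xt.
Qed.

Local Open Scope ring_scope.

Lemma card_fibre_Cpoch t s : (forall i, t i < d i)%N -> (s < M)%N ->
  #|fibre t s|%:R = Cpoch (fval a b t s + 1) n.
Proof.
move=> t_lt s_lt; set T := (weight t + s)%N.
have M_neq0 : M%:R != 0 :> rat by rewrite pnatr_eq0 -lt0n lcm_all_gt0.
have fvalE : fval a b t s = (b%:R - T%:R) / M%:R.
  rewrite /fval /T natrD natr_sum opprD addrA.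
  by congr ((_ - _ - _) / _); apply: eq_bigr => i _; rewrite natrM.
have [/andP[le_Tb /dvdnP[k bT_eq]] | bad] := boolP ((T <= b) && (M %| b - T))%N.
  rewrite (@card_fibre t s k) //; last by rewrite -/T mulnC -bT_eq subnKC.
  have -> : fval a b t s + 1 = k.+1%:R.
    by rewrite fvalE -natrB // bT_eq natrM mulfK // -addn1 natrD.
  by rewrite Cpoch_natS.
rewrite fibre0 // cards0 /Cpoch; case: ifP => // /andP[/natrP[m fm] m_gt0].
case/negP: bad; have {}m_gt0 : (0 < m)%N by rewrite -(ltr0n rat) -fm.
have bT : b%:R - T%:R = (m.-1 * M)%:R :> rat.
  rewrite natrM; apply: (mulIf (invr_neq0 M_neq0)); rewrite -fvalE mulfK //.
  by apply: (addIr 1); rewrite fm natr1 prednK.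
have b_eq : b = (T + m.-1 * M)%N.
  by apply/eqP; rewrite -(eqr_nat rat) natrD -bT addrC subrK.
by rewrite b_eq leq_addr addKn dvdn_mull.
Qed.

End Fibres.

Local Open Scope ring_scope.

Theorem mainTheorem2 (n : nat) (a : 'I_n -> nat) (b : nat) :
  (1 <= n)%N -> (forall i, (0 < a i)%N) ->
  (Qcount a b)%:R =
    \sum_(t : {ffun 'I_n -> 'I_(lcm_all a)}
            | [forall i, (t i < lcm_all a %/ a i)%N])
      \sum_(s < lcm_all a)
        Cpoch (fval a b (fun i => nat_of_ord (t i)) s + 1) n.
Proof.
move=> _ a_gt0; rewrite Qcount_fibres // natr_sum.
apply: eq_bigr => t /forallP t_lt; rewrite natr_sum.
by apply: eq_bigr => s _; rewrite card_fibre_Cpoch.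
Qed.
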